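(* Let $d\ge 2$ and let $c_0,\dots,c_7\in\mathbb{Z}_d$. If the $d$-state first degree cellular automaton with parameters $\langle c_0,\dots,c_7\rangle$ is reversible for every number of cells $n\in\mathbb{N}$ under the null boundary condition, then $c_4\cdot c_6\equiv 0 \pmod{\mathrm{rad}(d)}$.
   Context: Fix an integer $d\ge 2$ and the state set $S=\mathbb{Z}_d=\{0,1,\dots,d-1\}$. A first degree cellular automaton (FDCA) with parameters $\langle c_0,\dots,c_7\rangle$, $c_i\in\mathbb{Z}_d$, is the one-dimensional 3-neighborhood cellular automaton whose local rule $R:S^3\to S$ is $R(x,y,z)=c_0xyz+c_1xy+c_2xz+c_3yz+c_4x+c_5y+c_6z+c_7 \pmod d$. For $n\in\mathbb{N}$, $n\ge1$, the $n$-cell automaton under the null boundary condition acts on configurations $x=(x_0,\dots,x_{n-1})\in S^n$ by the global map $G_n:S^n\to S^n$, $G_n(x)_i=R(x_{i-1},x_i,x_{i+1})$ for $0\le i\le n-1$, with the convention $x_{-1}=x_n=0$. The automaton is reversible for a given $n$ if $G_n$ is a bijection. $\mathrm{rad}(d)=\prod_{p\mid d,\ p\text{ prime}}p$ is the product of the distinct primes dividing $d$; since $\mathrm{rad}(d)\mid d$, congruences of elements of $\mathbb{Z}_d$ modulo $\mathrm{rad}(d)$ are well defined. *)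

From mathcomp Require Import all_boot.
Set Implicit Arguments. Unset Strict Implicit. Unset Printing Implicit Defensive.

(* States: Z_d represented as 'I_d (values 0..d-1), arithmetic mod d on nat. *)

Definition rad (d : nat) : nat := \prod_(p <- primes d) p.

Definition fdca_rule (d : nat) (c : 'I_8 -> 'I_d) (x y z : nat) : nat :=
  (c (inord 0) * x * y * z + c (inord 1) * x * y + c (inord 2) * x * z
   + c (inord 3) * y * z + c (inord 4) * x + c (inord 5) * y
   + c (inord 6) * z + c (inord 7)) %% d.

(* value of cell k of configuration x (null boundary: 0 outside 0..n-1) *)
Definition cell (d n : nat) (x : {ffun 'I_n -> 'I_d}) (k : nat) : nat :=
  match insub k with Some i => val (x i) | None => 0 end.

Lemma fdca_rule_lt (d : nat) (c : 'I_8 -> 'I_d) x y z :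
  fdca_rule c x y z < d.
Proof.
  case: d c => [|d] c; first by case: (c (inord 0)).
  by rewrite ltn_mod.
Qed.

Definition fdca_global (d : nat) (c : 'I_8 -> 'I_d) (n : nat)
  (x : {ffun 'I_n -> 'I_d}) : {ffun 'I_n -> 'I_d} :=
  [ffun i : 'I_n =>
     Ordinal (fdca_rule_lt c (if val i == 0 then 0 else cell x (val i).-1)
                          (val (x i)) (cell x (val i).+1)) ].

Arguments fdca_global {d} c n x.
Definition fdca_reversible (d : nat) (c : 'I_8 -> 'I_d) (n : nat) : Prop :=
  bijective (fdca_global c n).

From mathcomp Require Import all_boot all_algebra ring.
Import GRing.Theory.
Set Implicit Arguments. Unset Strict Implicit. Unset Printing Implicit Defensive.

(* Let p be a prime divisor of d. Reducing configurations modulo p commutes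
   with the global maps, and reduction is onto, so the map of the automaton
   read over the field F_p is onto, hence injective, for every n. Over a
   field, however, c4 <> 0 and c6 <> 0 always produce two distinct
   configurations with the same image: a short explicit one when the rule is
   not affine in each variable (a case split on c5, c3, c1 and then c0, c2),
   and otherwise a nonzero solution of the linear recurrence
   c4 s(i-1) + c5 s(i) + c6 s(i+1) = 0 vanishing at both ends, which exists
   because the invertible recurrence step permutes the finite set F_p^2.
   Hence p divides c4 c6 for every prime p dividing d, i.e. rad d divides it. *)

Lemma dvdn_prod_primes (s : seq nat) m : uniq s -> all prime s ->
  {in s, forall p, p %| m} -> \prod_(p <- s) p %| m.
Proof.
elim: s => [|q s IHs] /=; first by rewrite big_nil dvd1n.
case/andP=> qNs s_uniq /andP[q_pr s_pr] s_dvd.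
have q_coprime : coprime q (\prod_(p <- s) p).
  rewrite prime_coprime // Euclid_dvd_prod // big_has; apply/hasPn => r rs.
  rewrite dvdn_prime2 //; last exact: (allP s_pr).
  by apply: contraNneq qNs => ->.
rewrite big_cons Gauss_dvd // s_dvd ?mem_head //=.
by apply: IHs => // p ps; apply: s_dvd; rewrite inE ps orbT.
Qed.

Lemma rad_dvdn d m : (forall p, prime p -> p %| d -> p %| m) -> rad d %| m.
Proof.
move=> dvd_m; apply: dvdn_prod_primes; first exact: primes_uniq.
  by apply/allP => p; rewrite mem_primes => /andP[].
by move=> p; rewrite mem_primes => /and3P[p_pr _ p_dvd_d]; apply: dvd_m.
Qed.

Lemma surj_injF (T : finType) (f : T -> T) :
  (forall y, exists x, f x = y) -> injective f.
Proof.
move=> f_surj x y; apply: (image_injP (A := T)); rewrite ?inE //.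
apply/eqP/eq_card => z.
by rewrite !inE; apply/codomP; have [w <-] := f_surj z; exists w.
Qed.

Section FieldRule.

Variables (F : fieldType) (C : nat -> F).
Local Open Scope ring_scope.

Definition frule (x y z : F) : F :=
  C 0 * x * y * z + C 1 * x * y + C 2 * x * z + C 3 * y * z
  + C 4 * x + C 5 * y + C 6 * z + C 7.

Definition fcell n (x : {ffun 'I_n -> F}) (k : nat) : F :=
  match insub k with Some i => x i | None => 0 end.

Definition fglobal n (x : {ffun 'I_n -> F}) : {ffun 'I_n -> F} :=
  [ffun i : 'I_n => frule (if val i == 0%N then 0 else fcell x (val i).-1)
                          (x i) (fcell x (val i).+1)].

Definition has_collision : Prop := exists n, ~ injective (@fglobal n).

Definition prev_cell (s : nat -> F) (i : nat) : F :=
  if i == 0%N then 0 else s i.-1.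

Lemma fcell_ffun n (s : nat -> F) k :
  (k <= n)%N -> s n = 0 -> fcell [ffun i : 'I_n => s i] k = s k.
Proof.
move=> le_kn sn0; rewrite /fcell; case: insubP => [i _ <-|]; first by rewrite ffunE.
by rewrite -leqNgt => le_nk; have -> : k = n by apply/eqP; rewrite eqn_leq le_kn.
Qed.

(* Configurations of n cells are given as sequences s with s n = 0, which
   encodes the null right boundary. *)
Lemma collision_of_seqs n (s t : nat -> F) : s n = 0 -> t n = 0 ->
    (exists2 i, (i < n)%N & s i != t i) ->
    (forall i, (i < n)%N ->
       frule (prev_cell s i) (s i) (s i.+1) = frule (prev_cell t i) (t i) (t i.+1)) ->
  has_collision.
Proof.
move=> sn0 tn0 [i0 lt_i0n st_i0] same_image; exists n => G_inj.
have /ffunP/(_ (Ordinal lt_i0n)) : [ffun i : 'I_n => s i] = [ffun i : 'I_n => t i].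
  apply: G_inj; apply/ffunP => i; rewrite !ffunE.
  have le_in : ((val i).+1 <= n)%N by exact: ltn_ord.
  rewrite (fcell_ffun le_in sn0) (fcell_ffun le_in tn0).
  case: i le_in => [[|k] lt_kn] le_kn /=; first exact: same_image 0%N lt_kn.
  have le_k_n : (k <= n)%N by rewrite ltnW // ltnW.
  rewrite (fcell_ffun le_k_n sn0) (fcell_ffun le_k_n tn0).
  exact: same_image k.+1 lt_kn.
by rewrite !ffunE => /eqP; rewrite (negbTE st_i0).
Qed.

Lemma frule_first_mid y z : frule 0 y z = y * (C 3 * z + C 5) + C 6 * z + C 7.
Proof. by rewrite /frule; ring. Qed.

Lemma frule_first_right y z : frule 0 y z = z * (C 3 * y + C 6) + C 5 * y + C 7.
Proof. by rewrite /frule; ring. Qed.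

Lemma frule_last_left x y : frule x y 0 = x * (C 1 * y + C 4) + C 5 * y + C 7.
Proof. by rewrite /frule; ring. Qed.

Lemma frule_last_mid x y : frule x y 0 = y * (C 1 * x + C 5) + C 4 * x + C 7.
Proof. by rewrite /frule; ring. Qed.

Lemma collision_c5_eq0 : C 5 = 0 -> has_collision.
Proof.
move=> c5_0; apply: (@collision_of_seqs 1%N (nth 0 [:: 1]) (nth 0 [:: 0])) => //.
  by exists 0%N => //=; rewrite oner_neq0.
by case=> [|i] //= _; rewrite /prev_cell /= /frule c5_0; ring.
Qed.

(* Pick z0 killing the slope of the first cell in its own state; either the
   last cell also ignores its left neighbour, or the left cells can be
   adjusted to compensate. *)
Lemma collision_c3_neq0 : C 3 != 0 -> has_collision.
Proof.
move=> c3_nz; pose z0 := - C 5 / C 3.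
have slope0 : C 3 * z0 + C 5 = 0 by rewrite /z0; field.
have [slope1|slope1] := eqVneq (C 1 * z0 + C 4) 0.
  apply: (@collision_of_seqs 2%N (nth 0 [:: 0; z0]) (nth 0 [:: 1; z0])) => //.
    by exists 0%N => //=; rewrite eq_sym oner_neq0.
  case=> [|[|i]] //= _; rewrite /prev_cell /=.
    by rewrite !frule_first_mid slope0 !mulr0.
  by rewrite !frule_last_left slope1 !mulr0.
pose y1 := - C 6 / C 3.
pose y2 := (y1 * (C 1 * (z0 + 1) + C 4) + C 5 * (z0 + 1) - C 5 * z0) / (C 1 * z0 + C 4).
apply: (@collision_of_seqs 2%N (nth 0 [:: y1; z0 + 1]) (nth 0 [:: y2; z0])) => //.
  by exists 1%N => //=; rewrite -subr_eq0 addrAC subrr add0r oner_neq0.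
case=> [|[|i]] //= _; rewrite /prev_cell /=.
  have slope0' : C 3 * (z0 + 1) + C 5 = C 3 by rewrite mulrDr mulr1 addrAC slope0 add0r.
  by rewrite !frule_first_mid slope0 slope0' mulr0 /y1; field.
by rewrite !frule_last_left /y2 divfK //; ring.
Qed.

Lemma collision_c1_neq0 : C 1 != 0 -> has_collision.
Proof.
move=> c1_nz; pose x0 := - C 5 / C 1.
have slope0 : C 1 * x0 + C 5 = 0 by rewrite /x0; field.
have [slope1|slope1] := eqVneq (C 3 * x0 + C 6) 0.
  apply: (@collision_of_seqs 2%N (nth 0 [:: x0; 0]) (nth 0 [:: x0; 1])) => //.
    by exists 1%N => //=; rewrite eq_sym oner_neq0.
  case=> [|[|i]] //= _; rewrite /prev_cell /=.
    by rewrite !frule_first_right slope1 !mulr0.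
  by rewrite !frule_last_mid slope0 !mulr0.
pose z1 := - C 4 / C 1.
pose z2 := (z1 * (C 3 * (x0 + 1) + C 6) + C 5 * (x0 + 1) - C 5 * x0) / (C 3 * x0 + C 6).
apply: (@collision_of_seqs 2%N (nth 0 [:: x0 + 1; z1]) (nth 0 [:: x0; z2])) => //.
  by exists 0%N => //=; rewrite -subr_eq0 addrAC subrr add0r oner_neq0.
case=> [|[|i]] //= _; rewrite /prev_cell /=.
  by rewrite !frule_first_right /z2 divfK //; ring.
have slope0' : C 1 * (x0 + 1) + C 5 = C 1 by rewrite mulrDr mulr1 addrAC slope0 add0r.
by rewrite !frule_last_mid slope0 slope0' mulr0 /z1; field.
Qed.

(* Three cells: g and e make the first and last cells agree, and the free
   entry q (resp. w) of the third cell then makes the middle cell agree. *)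
Lemma collision_c0_or_c2 : C 1 = 0 -> C 3 = 0 -> C 5 != 0 -> C 6 != 0 ->
  (C 0 != 0) || (C 2 != 0) -> has_collision.
Proof.
move=> c1_0 c3_0 c5_nz c6_nz c0_or_c2.
pose g := C 6 / C 5; pose e := C 4 / C 5.
have g_nz : g != 0 by rewrite mulf_neq0 ?invr_eq0.
have [c2_0|c2_nz] := eqVneq (C 2) 0.
  rewrite c2_0 eqxx orbF in c0_or_c2.
  pose q := (C 5 - C 4 * g - C 6 * e) / (g * C 0).
  apply: (@collision_of_seqs 3%N (nth 0 [:: 0; 0; e + q]) (nth 0 [:: - g; 1; q])) => //.
    by exists 1%N => //=; rewrite eq_sym oner_neq0.
  case=> [|[|[|i]]] //= _; rewrite /prev_cell /= /frule c1_0 c2_0 c3_0 /q /g /e;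
    by field; rewrite ?c5_nz ?c6_nz ?c0_or_c2.
pose w := (C 5 - C 4 * g - C 6 * e) / (g * C 2).
apply: (@collision_of_seqs 3%N (nth 0 [:: 0; 1; w - e]) (nth 0 [:: g; 0; w])) => //.
  by exists 1%N => //=; rewrite oner_neq0.
case=> [|[|[|i]]] //= _; rewrite /prev_cell /= /frule c1_0 c3_0 /w /g /e;
  by field; rewrite ?c5_nz ?c6_nz ?c2_nz.
Qed.

End FieldRule.

Section FiniteFieldRule.

Variables (F : finFieldType) (C : nat -> F).
Local Open Scope ring_scope.

Lemma collision_affine : C 0 = 0 -> C 1 = 0 -> C 2 = 0 -> C 3 = 0 ->
  C 4 != 0 -> C 6 != 0 -> has_collision C.
Proof.
move=> c0_0 c1_0 c2_0 c3_0 c4_nz c6_nz.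
pose step (u : F * F) := (u.2, - (C 4 * u.1 + C 5 * u.2) / C 6).
have step_inj : injective step.
  move=> [a b] [a' b'] [/= <-] /(mulIf (invr_neq0 c6_nz))/oppr_inj/addIr.
  by move/(mulfI c4_nz) ->.
have step_rule u : frule C u.1 u.2 (step u).2 = frule C 0 0 0.
  by rewrite /frule c0_0 c1_0 c2_0 c3_0 /=; field.
pose s m := (iter m step (0, 1)).2.
have prev_s m : prev_cell s m = (iter m step (0, 1)).1.
  by case: m => [|m]; rewrite /prev_cell //= iterS.
have := iter_order step_inj (0, 1); have := order_gt0 step (0, 1).
case: (order step (0, 1)) => [|[|n]] // _; first by case=> /eqP; rewrite oner_eq0.
rewrite iterS => /(congr1 fst) /= s_last.
apply: (@collision_of_seqs F C n.+1 s (fun _ => 0)) => //.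
  by exists 0%N => //=; rewrite oner_neq0.
by move=> i _; rewrite prev_s /s iterS step_rule /prev_cell; case: (i == 0%N).
Qed.

Lemma collision_c4_c6 : C 4 != 0 -> C 6 != 0 -> has_collision C.
Proof.
move=> c4_nz c6_nz.
have [c5_0|c5_nz] := eqVneq (C 5) 0; first exact: collision_c5_eq0.
have [c3_0|c3_nz] := eqVneq (C 3) 0; last exact: collision_c3_neq0.
have [c1_0|c1_nz] := eqVneq (C 1) 0; last exact: collision_c1_neq0.
have [c0_0|c0_nz] := eqVneq (C 0) 0; last by apply: collision_c0_or_c2; rewrite ?c0_nz.
have [c2_0|c2_nz] := eqVneq (C 2) 0; last by apply: collision_c0_or_c2; rewrite ?c2_nz ?orbT.
exact: collision_affine.
Qed.

End FiniteFieldRule.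

Section ReductionModPrime.

Variables (d p : nat) (c : 'I_8 -> 'I_d).
Hypotheses (p_pr : prime p) (p_dvd_d : (p %| d)%N) (d_gt0 : (0 < d)%N).
Local Open Scope ring_scope.

Definition coef_mod (k : nat) : 'F_p := (val (c (inord k)))%:R.

Definition config_mod n (z : {ffun 'I_n -> 'I_d}) : {ffun 'I_n -> 'F_p} :=
  [ffun i => (val (z i))%:R].

Lemma config_mod_global n (z : {ffun 'I_n -> 'I_d}) :
  config_mod (fdca_global c n z) = fglobal coef_mod (config_mod z).
Proof.
have cell_mod k : (cell z k)%:R = fcell (config_mod z) k :> 'F_p.
  by rewrite /cell /fcell; case: insub => [i|] //; rewrite ffunE.
apply/ffunP => i; rewrite !ffunE /= /fdca_rule.
rewrite -Fp_nat_mod // (modn_dvdm _ p_dvd_d) Fp_nat_mod //.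
by rewrite !natrD !natrM /frule -!cell_mod; case: (val i == 0%N).
Qed.

Lemma config_mod_surj n (w : {ffun 'I_n -> 'F_p}) : exists z, config_mod z = w.
Proof.
have lt_wp i : (val (w i) < p)%N.
  by apply: leq_trans (ltn_ord (w i)) _; rewrite Fp_cast.
have lt_wd i : (val (w i) < d)%N by apply: leq_trans (lt_wp i) (dvdn_leq d_gt0 p_dvd_d).
exists [ffun i => Ordinal (lt_wd i)]; apply/ffunP => i; rewrite !ffunE.
by apply: val_inj; rewrite /= val_Fp_nat // modn_small ?lt_wp.
Qed.

Lemma fglobal_mod_inj n : fdca_reversible c n -> injective (@fglobal _ coef_mod n).
Proof.
case=> g _ Kg; apply: surj_injF => w; have [z <-] := config_mod_surj w.
by exists (config_mod (g z)); rewrite -config_mod_global Kg.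
Qed.

End ReductionModPrime.

Theorem lemma3 (d : nat) (c : 'I_8 -> 'I_d) :
  2 <= d ->
  (forall n : nat, 1 <= n -> fdca_reversible c n) ->
  (val (c (inord 4)) * val (c (inord 6)) = 0 %[mod rad d]).
Proof.
move=> d_ge2 c_rev; rewrite mod0n; apply/eqP; apply: rad_dvdn => p p_pr p_dvd_d.
apply/negPn/negP => p_ndvd.
have coef_mod_neq0 k : (coef_mod p c k != 0)%R = ~~ (p %| c (inord k)).
  by rewrite -(inj_eq val_inj) /= val_Fp_nat.
have c4_nz : (coef_mod p c 4 != 0)%R.
  by rewrite coef_mod_neq0; apply: contra p_ndvd; apply: dvdn_mulr.
have c6_nz : (coef_mod p c 6 != 0)%R.
  by rewrite coef_mod_neq0; apply: contra p_ndvd; apply: dvdn_mull.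
have [n G_ninj] := collision_c4_c6 c4_nz c6_nz.
apply: G_ninj; case: n => [|n]; first by move=> x y _; apply/ffunP => -[].
by apply: fglobal_mod_inj (c_rev _ _) => //; apply: ltnW.
Qed.
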